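(* Let $X$ be a regular Lusin space. Then every quasicontinuous function $f:X\to\mathbb{R}$ is of the first Baire class.
   Context: All spaces are assumed regular. A Hausdorff space $X$ is a Lusin space (in the sense of Kunen) if (a) every nowhere dense subset of $X$ is countable, (b) $X$ has at most countably many isolated points, and (c) $X$ is uncountable. A function $f:X\to Y$ is quasicontinuous if for every $x\in X$, every open $V\ni f(x)$ and every open $U\ni x$ there is a nonempty open $W\subseteq U$ with $f(W)\subseteq V$. A function $f:X\to\mathbb{R}$ is of the first Baire class if it is the pointwise limit of a sequence of continuous real-valued functions on $X$. *)

From HB Require Import structures.
From mathcomp Require Import all_boot all_order all_algebra.
From mathcomp Require Import all_classical all_reals all_analysis.
Set Implicit Arguments. Unset Strict Implicit. Unset Printing Implicit Defensive.
Import Order.TTheory GRing.Theory Num.Theory numFieldNormedType.Exports.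
Local Open Scope classical_set_scope.
Local Open Scope ring_scope.

Definition nowhere_dense (T : topologicalType) (A : set T) : Prop :=
  interior (closure A) = set0.

(* Lusin space in the sense of Kunen (Hausdorffness stated separately). *)
Definition lusin_space (T : topologicalType) : Prop :=
  [/\ (forall A : set T, nowhere_dense A -> countable A),
      countable (isolated [set: T]) &
      ~ countable [set: T]].

Definition quasicontinuous (T : topologicalType) (R : realType) (f : T -> R) : Prop :=
  forall (x : T) (V : set R) (U : set T),
    open V -> V (f x) -> open U -> U x ->
    exists W : set T, [/\ open W, W !=set0, W `<=` U & f @` W `<=` V].

Definition first_baire_class (T : topologicalType) (R : realType) (f : T -> R) : Prop :=
  exists g : nat -> T -> R,
    (forall n, continuous (g n)) /\
    (forall x, (fun n => g n x) @ \oo --> f x).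

From HB Require Import structures.
From mathcomp Require Import all_boot all_order all_algebra.
From mathcomp Require Import all_classical all_reals all_analysis.
From mathcomp Require Import borel_hierarchy lra.
Set Implicit Arguments.
Unset Strict Implicit.
Unset Printing Implicit Defensive.
Import Order.TTheory GRing.Theory Num.Theory numFieldNormedType.Exports.
Local Open Scope classical_set_scope.
Local Open Scope ring_scope.

(* A Lusin space has no uncountable family of pairwise disjoint nonempty open
   sets: a point chosen in each of them is isolated or lies in a discrete set
   of non-isolated points, which is nowhere dense.  A maximal such family
   refining an open cover leaves a nowhere dense, hence countable, part of the
   union uncovered, so the space is hereditarily Lindelof; being regular, it is
   normal and its open sets are F_sigma.  A quasicontinuous f has nowhere dense
   oscillation sets, so it is continuous off a countable set, and each level
   set {t < f} or {f < t} is an open set plus countably many points, hence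
   F_sigma.  In a normal space this is enough for f to be the pointwise limit
   of finite maxima of Urysohn functions. *)

Lemma countableU (T : Type) (A B : set T) :
  countable A -> countable B -> countable (A `|` B).
Proof.
move=> cA cB; rewrite -bigcup2E.
by apply: bigcup_countable => // -[|[|n]].
Qed.

Lemma countable_sub_range (I : Type) (i0 : I) (J : set I) :
  countable J -> exists e : nat -> I, J `<=` range e.
Proof.
move=> /pfcard_geP [->|/surjfunPex [e ->]]; first by exists (fun=> i0).
by exists e => _ [n _ <-]; exists n.
Qed.

Lemma maximal_trivIset (T : Type) (Q : set (set T)) :
  (forall V, Q V -> V !=set0) ->
  exists M, [/\ M `<=` Q, trivIset M id &
                forall V, Q V -> exists2 W, M W & V `&` W !=set0].
Proof.
move=> Q0.
pose P := [set M : set (set T) | M `<=` Q /\ trivIset M id].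
have [M [[MQ Mdisj] Mmax]] : exists M, P M /\ forall B, M `<` B -> ~ P B.
  apply: Zorn_bigcup => C CP Ctot.
  split=> [V [A CA AV]|V W [A CA AV] [B CB BW]]; first exact: (CP A CA).1.
  have [AB|BA] := Ctot A B CA CB.
  - exact: (CP B CB).2 V W (AB _ AV) BW.
  - exact: (CP A CA).2 V W AV (BA _ BW).
exists M; split => // V QV; apply: contrapT => Vdisj.
have MV0 W : M W -> V `&` W = set0.
  move=> MW; apply/seteqP; split=> // x VWx.
  by apply: Vdisj; exists W => //; exists x.
have nMV : ~ M V.
  by move=> /MV0; rewrite setIid => V0; have := Q0 V QV; rewrite V0 => -[].
apply: (Mmax (M `|` [set V])).
  by split=> [W MW|/(_ V (or_intror erefl))]; [left|exact: nMV].
split=> [W [/MQ //|->//]|W1 W2 [MW1|->] [MW2|->] //].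
- exact: Mdisj.
- by rewrite setIC MV0 // => -[].
- by rewrite MV0 // => -[].
Qed.

Section nowhere_dense.
Context (T : topologicalType).

Lemma nowhere_denseP (A : set T) :
  nowhere_dense A <-> forall G, open G -> G `<=` closure A -> G = set0.
Proof.
split=> [ndA G oG|ndA]; first by rewrite open_subsetE // ndA subset0.
by apply: ndA; [exact: open_interior|exact: interior_subset].
Qed.

Lemma nowhere_dense_discrete (Z : set T) : accessible_space T ->
  (forall z, Z z -> ~ isolated [set: T] z) ->
  (forall z, Z z -> exists2 V, open V & V `&` Z = [set z]) -> nowhere_dense Z.
Proof.
move=> T1 Zniso Zdisc; apply/nowhere_denseP => G oG GZ.
apply/seteqP; split=> // y Gy.
have [z [Zz Gz]] := GZ y Gy G (open_nbhs_nbhs (conj oG Gy)).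
have [V oV VZ] := Zdisc z Zz.
have [Vz _] : (V `&` Z) z by rewrite VZ.
apply: (Zniso z Zz); split; first by rewrite in_setE.
exists (G `&` V); first by apply: open_nbhs_nbhs; split; [exact: openI|].
rewrite setIT; apply/seteqP; split=> [w [Gw Vw]|w ->] //.
apply: contrapT => wz.
have oGVz : open (G `&` V `&` ~` [set z]).
  by apply: openI; [exact: openI|exact/closed_openC/accessible_closed_set1].
have [u [Zu [[_ Vu] uz]]] :=
  GZ w Gw _ (open_nbhs_nbhs (conj oGVz (conj (conj Gw Vw) wz))).
by apply: uz; have : (V `&` Z) u by []; rewrite VZ.
Qed.

End nowhere_dense.

(* Equivalent to every subspace being Lindelof. *)
Definition hereditarily_lindelof (T : topologicalType) : Prop :=
  forall (I : Type) (U : I -> set T), (forall i, open (U i)) ->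
  exists2 J : set I, countable J & \bigcup_(i in J) U i = \bigcup_i U i.

Section lusin_space.
Context (T : topologicalType).
Hypothesis T1 : accessible_space T.
Hypothesis nowhere_dense_countable :
  forall A : set T, nowhere_dense A -> countable A.
Hypothesis isolated_countable : countable (isolated [set: T]).

Lemma trivIset_open_countable (M : set (set T)) :
  (forall V, M V -> open V /\ V !=set0) -> trivIset M id -> countable M.
Proof.
move=> Mo Mdisj.
have [[x0 _]|T0] := pselect (exists x : T, True); last first.
  rewrite (_ : M = set0) //; apply/seteqP; split=> // V /Mo[_ [x _]].
  by apply: T0; exists x.
pose p V := xget x0 V.
have pM V : M V -> V (p V) by move=> /Mo[_]; exact: xgetPex.
have p_inj : {in M &, injective p}.
  move=> V W /set_mem MV /set_mem MW pVW; apply: Mdisj => //.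
  by exists (p V); split; [exact: pM|rewrite pVW; exact: pM].
pose Z := p @` (M `&` [set V | ~ isolated [set: T] (p V)]).
have Znd : nowhere_dense Z.
  apply: nowhere_dense_discrete => // [_ [V [_ nisoV] <-] //|].
  move=> _ [V [MV nisoV] <-].
  exists V; first by have [] := Mo V MV.
  apply/seteqP; split=> [w [Vw [W [MW _] pWw]]|_ ->]; last first.
    by split; [exact: pM|exists V].
  have VW : V = W.
    by apply: Mdisj => //; exists w; split=> //; rewrite -pWw; exact: pM.
  by rewrite -pWw -VW.
rewrite -(eq_countable (inj_card_eq p_inj)).
have pMsub : p @` M `<=` isolated [set: T] `|` Z.
  move=> _ [V MV <-]; have [|nisoV] := pselect (isolated [set: T] (p V)).
    by left.
  by right; exists V.
apply: sub_countable (subset_card_le pMsub) _.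
by apply: countableU => //; exact: nowhere_dense_countable.
Qed.

Lemma lusin_hereditarily_lindelof : hereditarily_lindelof T.
Proof.
move=> I U oU; pose O := \bigcup_i U i.
pose Q := [set V : set T | [/\ open V, V !=set0 & exists i, V `<=` U i]].
have [M [MQ Mdisj Mmax]] := @maximal_trivIset T Q (fun V '(And3 _ V0 _) => V0).
have cM : countable M.
  by apply: trivIset_open_countable => // V /MQ[].
pose W := \bigcup_(V in M) V.
have oW : open W by apply: bigcup_open => V /MQ[].
have ndOW : nowhere_dense (O `\` W).
  apply/nowhere_denseP => G oG GOW; apply/seteqP; split=> // y Gy.
  have [z [[[i _ Uiz] nWz] Gz]] := GOW y Gy G (open_nbhs_nbhs (conj oG Gy)).
  have QGUi : Q (G `&` U i).
    by split; [exact: openI|exists z|exists i; exact: subIsetr].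
  have [V MV [w [[Gw _] Vw]]] := Mmax _ QGUi.
  have oGV : open (G `&` V) by apply: openI => //; have [] := MQ V MV.
  have [u [[_ nWu] [_ Vu]]] :=
    GOW w Gw (G `&` V) (open_nbhs_nbhs (conj oGV (conj Gw Vw))).
  by apply: nWu; exists V.
have [[i0 _]|I0] := pselect (exists i : I, True); last first.
  exists set0 => //; rewrite bigcup_set0.
  by apply/seteqP; split=> // x [i _ _]; apply: I0; exists i.
have /choice [iV iVP] : forall V, exists i, M V -> V `<=` U i.
  by move=> V; have [/MQ[_ _ [i ?]]|] := pselect (M V); [exists i|exists i0].
have /choice [ix ixP] : forall x, exists i, O x -> U i x.
  by move=> x; have [[i _ ?]|] := pselect (O x); [exists i|exists i0].
exists (iV @` M `|` ix @` (O `\` W)).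
  apply: countableU; apply: (sub_countable (card_image_le _ _)) => //.
  exact: nowhere_dense_countable.
apply/seteqP; split=> [x [i _ Uix]|x Ox]; first by exists i.
have [[V MV Vx]|nWx] := pselect (W x).
  by exists (iV V); [left; exists V|exact: iVP].
by exists (ix x); [right; exists x|exact: ixP].
Qed.

End lusin_space.

Section Fsigma.
Context (T : topologicalType).

Lemma FsigmaU (A B : set T) : Fsigma A -> Fsigma B -> Fsigma (A `|` B).
Proof.
move=> [F cF ->] [G cG ->]; exists (fun n => F n `|` G n).
  by move=> n; exact: closedU.
by rewrite bigcupU.
Qed.

Lemma countable_Fsigma (A : set T) :
  accessible_space T -> countable A -> Fsigma A.
Proof.
move=> T1 /pfcard_geP[->|/surjfunPex[e ->]].
  by exists (fun=> set0) => [_|]; [exact: closed0|rewrite bigcup0].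
exists (fun n => [set e n]); first by move=> n; exact: accessible_closed_set1.
by apply/seteqP; split=> [_ [n _ <-]|_ [n _ ->]]; exists n.
Qed.

Definition closed_exhaustion (S : set T) (C : nat -> set T) :=
  [/\ forall n, closed (C n), {homo C : n m / (n <= m)%N >-> n `<=` m}
     & S = \bigcup_n C n].

Lemma Fsigma_closed_exhaustion (S : set T) :
  Fsigma S -> exists C, closed_exhaustion S C.
Proof.
move=> [F cF ->]; exists (fun n => \big[setU/set0]_(i < n.+1) F i).
split=> [n|n m nm|]; first exact: closed_bigsetU.
  by apply: subset_bigsetU; rewrite ltnS.
by rewrite bigcup_bigsetU_bigcup.
Qed.

End Fsigma.

Section regular_hereditarily_lindelof.
Context (T : topologicalType).
Hypothesis regT : regular_space T.
Hypothesis lindT : hereditarily_lindelof T.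

Lemma regular_open_closure_sub (x : T) (O : set T) : nbhs x O ->
  exists2 V, open_nbhs x V & closure V `<=` O.
Proof.
move=> /regT[W xW cWO]; exists W°; first by split; [exact: open_interior|].
by apply: subset_trans cWO; apply: closureS; exact: interior_subset.
Qed.

Lemma open_closure_cover (O : set T) : open O ->
  exists V : nat -> set T, [/\ forall n, open (V n),
    forall n, closure (V n) `<=` O & \bigcup_n V n = O].
Proof.
move=> oO.
have /choice[V VP] : forall x, exists V : set T,
    [/\ open V, closure V `<=` O & O x -> V x].
  move=> x; have [Ox|nOx] := pselect (O x); last first.
    by exists set0; rewrite closure0; split=> [|//|/nOx//]; exact: open0.
  have [V [oV Vx] cVO] :=
    regular_open_closure_sub (open_nbhs_nbhs (conj oO Ox)).
  by exists V.
have oV x : open (V x) by have [] := VP x.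
have cVO x : closure (V x) `<=` O by have [] := VP x.
have VO x : V x `<=` O by move=> y /subset_closure; exact: cVO.
have [J cJ JV] := lindT oV.
have {}JV : \bigcup_(x in J) V x = O.
  rewrite JV; apply/seteqP; split=> [y [x _ /VO]//|y Oy].
  by exists y => //; have [_ _] := VP y; exact.
have [->|/set0P[x0 _]] := eqVneq O set0.
  exists (fun=> set0); split=> [n|n|]; last by rewrite bigcup0.
  - exact: open0.
  - by rewrite closure0.
have [e Je] := countable_sub_range x0 cJ.
exists (V \o e); split=> [n|n|]; [exact: oV|exact: cVO|].
apply/seteqP; split=> [y [n _ /VO]//|y]; rewrite -{1}JV => -[x Jx Vxy].
by have [n _ enx] := Je x Jx; exists n => //=; rewrite enx.
Qed.

Lemma open_Fsigma (O : set T) : open O -> Fsigma O.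
Proof.
move=> /open_closure_cover[V [_ VO UV]].
exists (closure \o V); first by move=> n; exact: closed_closure.
apply/seteqP; split=> [x|x [n _ /VO]//]; rewrite -{1}UV => -[n _ Vnx].
by exists n => //; exact: subset_closure.
Qed.

Lemma closed_disjoint_separation (A B : set T) :
  closed A -> closed B -> A `&` B = set0 ->
  exists U V, [/\ open U, open V, A `<=` U, B `<=` V & U `&` V = set0].
Proof.
move=> cA cB AB0.
have [a [oa caB UaB]] := open_closure_cover (closed_openC cB).
have [b [ob cbA UbA]] := open_closure_cover (closed_openC cA).
pose cl (c : nat -> set T) n := \bigcup_(k in `I_n.+1) closure (c k).
have clc c n : closed (cl c n).
  by apply: closed_bigcup => // k _; exact: closed_closure.
have cl_sub c n m : (m <= n)%N -> c m `<=` cl c n.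
  by move=> mn x cmx; exists m; [rewrite /= ltnS|exact: subset_closure].
exists (\bigcup_n (a n `&` ~` cl b n)), (\bigcup_n (b n `&` ~` cl a n)); split.
- by apply: bigcup_open => n _; apply: openI => //; exact: closed_openC.
- by apply: bigcup_open => n _; apply: openI => //; exact: closed_openC.
- move=> x Ax; have := (disjoints_subset A B).1 AB0 x Ax.
  rewrite -UaB => -[n _ anx]; exists n => //; split=> // -[k _ /cbA].
  exact.
- move=> x Bx; have BA0 : B `&` A = set0 by rewrite setIC.
  have := (disjoints_subset B A).1 BA0 x Bx.
  rewrite -UbA => -[n _ bnx]; exists n => //; split=> // -[k _ /caB].
  exact.
apply/seteqP; split=> // x [[n _ [anx nclb]] [m _ [bmx ncla]]].
have [nm|mn] := leqP n m.
  by apply: ncla; exact: cl_sub anx.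
by apply: nclb; apply: cl_sub bmx; exact: ltnW.
Qed.

End regular_hereditarily_lindelof.

Lemma countable_discontinuity_preimage_Fsigma (T Y : topologicalType)
    (f : T -> Y) (V : set Y) :
  accessible_space T -> regular_space T -> hereditarily_lindelof T ->
  countable [set x | ~ {for x, continuous f}] -> open V -> Fsigma (f @^-1` V).
Proof.
move=> T1 regT lindT cD oV.
pose D := [set x | ~ {for x, continuous f}].
have -> : f @^-1` V = (f @^-1` V)° `|` (f @^-1` V `&` D).
  apply/seteqP; split=> [x Vfx|x [/interior_subset //|[] //]].
  have [fx|] := pselect {for x, continuous f}; last by right.
  by left; apply: fx; exact: open_nbhs_nbhs.
apply: FsigmaU; first exact/open_Fsigma/open_interior.
apply: countable_Fsigma => //.
exact: sub_countable (subset_card_le (@subIsetr _ _ _)) cD.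
Qed.

Definition osc_ge (T : topologicalType) (R : realType) (f : T -> R) (e : R) :
    set T :=
  [set x | forall U, nbhs x U -> exists y z, [/\ U y, U z & e <= `|f y - f z|]].

Section quasicontinuous.
Context (T : topologicalType) (R : realType) (f : T -> R).

Lemma quasicontinuous_osc_ge_nowhere_dense (e : R) :
  quasicontinuous f -> 0 < e -> nowhere_dense (osc_ge f e).
Proof.
move=> qf e0; apply/nowhere_denseP => G oG Gosc.
apply/seteqP; split=> // x Gx.
have e20 : 0 < e / 2 by rewrite divr_gt0.
have [W [oW [w Ww] WG fW]] :=
  qf x _ G (ball_open (f x) (e / 2)) (ballxx (f x) e20) oG Gx.
have [a [osca Wa]] := Gosc w (WG w Ww) W (open_nbhs_nbhs (conj oW Ww)).
have [y [z [Wy Wz eyz]]] := osca W (open_nbhs_nbhs (conj oW Wa)).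
have := fW _ (imageP _ Wy); have := fW _ (imageP _ Wz).
rewrite /ball /= => fz fy.
have := ler_distD (f x) (f y) (f z); rewrite [`|f y - f x|]distrC; lra.
Qed.

Lemma not_osc_ge_continuous (x : T) :
  (forall m, ~ osc_ge f m.+1%:R^-1 x) -> {for x, continuous f}.
Proof.
move=> nosc; apply/cvgrPdist_lt => e e0.
have [m _ /(_ m (leqnn m)) me] := near_infty_natSinv_lt (PosNum e0).
apply: contrapT => nfx; apply: (nosc m) => U Ux; have Ux0 := nbhs_singleton Ux.
apply: contrapT => nyz; apply: nfx; apply: filterS Ux => y Uy.
rewrite ltNge; apply/negP => ey; apply: nyz.
by exists x, y; split=> //; exact: le_trans (ltW me) ey.
Qed.

Lemma quasicontinuous_discontinuity_countable :
  (forall A : set T, nowhere_dense A -> countable A) -> quasicontinuous f ->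
  countable [set x | ~ {for x, continuous f}].
Proof.
move=> nd qf.
have Dosc :
    [set x | ~ {for x, continuous f}] `<=` \bigcup_m osc_ge f m.+1%:R^-1.
  move=> x nfx; apply: contrapT => nosc.
  by apply/nfx/not_osc_ge_continuous => m oscm; apply: nosc; exists m.
apply: sub_countable (subset_card_le Dosc) _; apply: bigcup_countable => // m _.
by apply/nd/quasicontinuous_osc_ge_nowhere_dense; rewrite // invr_gt0.
Qed.

End quasicontinuous.

Definition rat_enum (R : realType) (k : nat) : R :=
  ratr (odflt 0%Q (unpickle k)).

Lemma rat_enum_between (R : realType) (a b : R) :
  a < b -> exists k, a < rat_enum R k < b.
Proof.
move=> /rat_in_itvoo[q]; rewrite in_itv /= => qab.
by exists (pickle q); rewrite /rat_enum pickleK.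
Qed.

Lemma continuous_bigmax (T : topologicalType) (R : realType) (I : Type)
    (s : seq I) (F : I -> T -> R) (g0 : T -> R) :
  continuous g0 -> (forall i, continuous (F i)) ->
  continuous (fun x => \big[Num.max/g0 x]_(i <- s) F i x).
Proof.
move=> cg0 cF; elim: s => [|i s IH].
  by under eq_fun do rewrite big_nil.
under eq_fun do rewrite big_cons.
by move=> x; apply: (@continuous_max R T (F i)); [exact: cF|exact: IH].
Qed.

Section closed_exhaustion_first_baire_class.
Context (T : topologicalType) (R : realType).
Hypothesis normalT : normal_space T.
Variables (f : T -> R) (P Q : R -> nat -> set T).
Hypothesis P_exhaust : forall t, closed_exhaustion [set x | t < f x] (P t).
Hypothesis Q_exhaust : forall t, closed_exhaustion [set x | f x < t] (Q t).

Let r := @rat_enum R.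
Let A n k := \bigcup_(i in [set i | (i < n.+1)%N /\ r i <= r k]) Q (r i) n.
Let B n k := P (r k) n.
Let phi n k : T -> R := Urysohn (A n k) (B n k).
(* On [B n k], [h n k] attains the level [r k]; on [A n k] it drops to at most
   [- n], which keeps the levels above [f x] out of the maximum [g n]. *)
Let h n k x := r k - (`|r k| + n%:R) * (1 - phi n k x).
Let g n x := \big[Num.max/h n 0%N x]_(0 <= k < n.+1) h n k x.

Let P_gt t n x : P t n x -> t < f x.
Proof.
have [_ _ Pt] := P_exhaust t => Px.
by suff : [set y | t < f y] x by []; rewrite Pt; exists n.
Qed.

Let Q_lt t n x : Q t n x -> f x < t.
Proof.
have [_ _ Qt] := Q_exhaust t => Qx.
by suff : [set y | f y < t] x by []; rewrite Qt; exists n.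
Qed.

Let separator_AB n k : uniform_separator (A n k) (B n k).
Proof.
have cA : closed (A n k).
  apply: closed_bigcup => [|i _]; last first.
    by have [cQ _ _] := Q_exhaust (r i); exact: cQ.
  by apply: (@sub_finite_set _ _ `I_n.+1) => // i [].
have cB : closed (B n k) by have [cP _ _] := P_exhaust (r k); exact: cP.
have AB0 : A n k `&` B n k = set0.
  apply/seteqP; split=> // x [[i [_ rik] /Q_lt fxi] /P_gt fxk].
  by have := lt_le_trans fxi rik; rewrite ltNge (ltW fxk).
exact: (@normal_separatorP R T).1 normalT _ _ cA cB AB0.
Qed.

Let phi_ge0_le1 n k x : 0 <= phi n k x <= 1.
Proof.
have := @Urysohn_range T R (A n k) (B n k) _ (imageT _ x).
by rewrite /= in_itv.
Qed.

Let h_le n k x : h n k x <= r k.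
Proof.
rewrite /h gerDl oppr_le0; have /andP[_ phi1] := phi_ge0_le1 n k x.
by apply: mulr_ge0; [apply: addr_ge0|rewrite subr_ge0].
Qed.

Let h_B n k x : B n k x -> h n k x = r k.
Proof.
move=> Bx; rewrite /h /phi (Urysohn_sub1 (separator_AB n k) (imageP _ Bx)).
by rewrite subrr mulr0 subr0.
Qed.

Let h_A n k x : A n k x -> h n k x <= - n%:R.
Proof.
move=> Ax; rewrite /h /phi (Urysohn_sub0 (separator_AB n k) (imageP _ Ax)).
by rewrite subr0 mulr1; have := ler_norm (r k); lra.
Qed.

Let h_continuous n k : continuous (h n k).
Proof.
move=> x; apply: cvgB; first exact: cvg_cst.
apply: cvgM; first exact: cvg_cst.
by apply: cvgB; [exact: cvg_cst|exact: Urysohn_continuous].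
Qed.

Let g_continuous n : continuous (g n).
Proof. exact: continuous_bigmax. Qed.

Let g_lower x e : 0 < e -> \forall n \near \oo, f x - e < g n x.
Proof.
move=> e0; have [k /andP[lo hi]] : exists k, f x - e < r k < f x.
  by apply: rat_enum_between; rewrite gtrDl oppr_lt0.
have [_ ndP Pk] := P_exhaust (r k).
have : [set y | r k < f y] x by []; rewrite Pk => -[N _ PNx].
near=> n; apply: (lt_le_trans lo).
have kn : (k < n.+1)%N by near: n; exact: nbhs_infty_ge.
have Nn : (N <= n)%N by near: n; exact: nbhs_infty_ge.
rewrite -(h_B (ndP N n Nn x PNx)).
by rewrite /g (le_bigmax_seq _ k) ?mem_index_iota.
Unshelve. all: by end_near.
Qed.

Let g_upper x e : 0 < e -> \forall n \near \oo, g n x < f x + e.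
Proof.
move=> e0; have [k1 /andP[lo hi]] : exists k, f x < r k < f x + e.
  by apply: rat_enum_between; rewrite ltrDl.
have [_ ndQ Qk1] := Q_exhaust (r k1).
have : [set y | f y < r k1] x by []; rewrite Qk1 => -[N _ QNx].
near=> n; have k1n : (k1 < n.+1)%N by near: n; exact: nbhs_infty_ge.
have Nn : (N <= n)%N by near: n; exact: nbhs_infty_ge.
have fxn : `|f x| < n%:R by near: n; exact: nbhs_infty_gtr.
have g_lt k : h n k x < f x + e.
  have [rk_lt|rk1_le] := ltP (r k) (r k1).
    by apply: le_lt_trans (h_le _ _ _) _; exact: lt_trans hi.
  apply: le_lt_trans (h_A _) _; first by exists k1 => //; exact: ndQ QNx.
  have := ler_norm (- f x); rewrite normrN; lra.
by apply: bigmax_lt => [|k _]; exact: g_lt.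
Unshelve. all: by end_near.
Qed.

Lemma closed_exhaustion_first_baire_class : first_baire_class f.
Proof.
exists g; split=> [|x]; first exact: g_continuous.
apply/cvgrPdist_lt => e e0.
apply: filterS2 (g_lower x e0) (g_upper x e0) => n lo up.
by rewrite ltr_distlC lo.
Qed.

End closed_exhaustion_first_baire_class.

Unset Implicit Arguments.

Theorem proposition3p4 (X : topologicalType) (R : realType) :
  hausdorff_space X -> regular_space X -> lusin_space X ->
  forall f : X -> R, quasicontinuous f -> first_baire_class f.
Proof.
move=> hX regX [ndX isoX _] f qf.
have T1 := hausdorff_accessible hX.
have lindX := lusin_hereditarily_lindelof T1 ndX isoX.
have normalX : normal_space X.
  exact: (@normal_openP R X).2 (closed_disjoint_separation regX lindX).
have cD := quasicontinuous_discontinuity_countable ndX qf.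
have FsigmaV (V : set R) : open V -> Fsigma (f @^-1` V).
  exact: countable_discontinuity_preimage_Fsigma T1 regX lindX cD.
have /choice[P PP] : forall t, exists C, closed_exhaustion [set x | t < f x] C.
  by move=> t; exact: Fsigma_closed_exhaustion (FsigmaV _ (@open_gt _ t)).
have /choice[Q QQ] : forall t, exists C, closed_exhaustion [set x | f x < t] C.
  by move=> t; exact: Fsigma_closed_exhaustion (FsigmaV _ (@open_lt _ t)).
exact: (closed_exhaustion_first_baire_class normalX PP QQ).
Qed.
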